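(* Let $\mathcal{Y}=\{1,\dots,K\}$ and let $P,Q$ be a source and a target distribution on $\mathcal{X}\times\mathcal{Y}$ with label marginals $p(y),q(y)$, satisfying the label shift assumption $q(x\mid y)=p(x\mid y)$ for all $y$, and such that the likelihood ratios $w(y)=q(y)/p(y)$ are well defined and known for all $y\in\mathcal{Y}$. Let $\{(X_i,Y_i)\}_{i\in\mathcal{I}_1}$ be training data, and let $\widehat{\pi}:\mathcal{X}\to\Delta_K$ be a probabilistic predictor computed from the training data only. Let $(X_1,Y_1),\dots,(X_n,Y_n)$ (the calibration set $\mathcal{I}_2$) be i.i.d. from $P$, let $(X_{n+1},Y_{n+1})$ be drawn from $Q$ independently, and let $U_1,\dots,U_{n+1}$ be i.i.d. $\mathrm{Unif}([0,1])$ independent of everything else. Define, for $x\in\mathcal{X}$, $y\in\mathcal{Y}$, $u\in[0,1]$, $$\rho_y(x;\widehat{\pi})=\sum_{y'=1}^K \widehat{\pi}_{y'}(x)\,\mathbf{1}\{\widehat{\pi}_{y'}(x)>\widehat{\pi}_y(x)\},\qquad r(x,y,u;\widehat{\pi})=\rho_y(x;\widehat{\pi})+u\cdot\widehat{\pi}_y(x),$$ and $r_i=r(X_i,Y_i,U_i;\widehat{\pi})$ for $i=1,\dots,n$. For each $y\in\mathcal{Y}$ set $$\tilde p_i^w(y)=\frac{w(Y_i)}{\sum_{j=1}^n w(Y_j)+w(y)}\ (i=1,\dots,n),\qquad \tilde p_{n+1}^w(y)=\frac{w(y)}{\sum_{j=1}^n w(Y_j)+w(y)},$$ $$\tau^\star_w(y)=Q_{1-\alpha}\Big(\sum_{i=1}^n\tilde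 p_i^w(y)\,\delta_{r_i}+\tilde p_{n+1}^w(y)\,\delta_1\Big),$$ and define the prediction set $\mathcal{F}^{(w)}_{\tau^\star}(x,u;\widehat{\pi})=\{y\in\mathcal{Y}:\rho_y(x;\widehat{\pi})+u\cdot\widehat{\pi}_y(x)\le\tau^\star_w(y)\}$. Then for any $\alpha\in(0,1)$, $$\mathbb{P}\big(Y_{n+1}\in\mathcal{F}^{(w)}_{\tau^\star}(X_{n+1},U_{n+1};\widehat{\pi})\ \big|\ \{(X_i,Y_i)\}_{i\in\mathcal{I}_1}\big)\ge 1-\alpha.$$
   Context: $\Delta_K$ denotes the probability simplex in $\mathbb{R}^K$ and $\widehat{\pi}_y(x)$ is the $y$-th coordinate of $\widehat{\pi}(x)$. For a distribution $F$ on $\mathbb{R}$, $Q_\beta(F)=\inf\{z:F(z)\ge\beta\}$ denotes its $\beta$-quantile (with $F$ also denoting its CDF); $\delta_a$ is the point mass at $a$. *)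

From HB Require Import structures.
From mathcomp Require Import all_boot all_order all_algebra.
From mathcomp Require Import all_classical all_reals all_analysis.
Set Implicit Arguments. Unset Strict Implicit. Unset Printing Implicit Defensive.
Import Order.TTheory GRing.Theory Num.Theory.
Local Open Scope classical_set_scope.
Local Open Scope ring_scope.

(* Label space Y = {1,...,K+1}, represented as 'I_K.+1 (i.e. the number of
   classes is K.+1 >= 1), with the discrete sigma-algebra. *)
Definition label (K : nat) := 'I_K.+1.
HB.instance Definition _ K := Choice.on (label K).
HB.instance Definition _ K := isPointed.Build (label K) ord0.
HB.instance Definition _ K := @isMeasurable.Build default_measure_display
  (label K) discrete_measurable discrete_measurable0
  discrete_measurableC discrete_measurableU.

Section defs.
Context {R : realType} {d : measure_display} {X : measurableType d} {K : nat}.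

Definition label_marg (P : probability (X * label K)%type R) (y : label K) : R :=
  fine (P (setT `*` [set y])).

Definition lratio (P Q : probability (X * label K)%type R) (y : label K) : R :=
  label_marg Q y / label_marg P y.

(* label shift: q(x | y) = p(x | y) for every y, i.e. for every measurable A,
   Q(A x {y}) / q(y) = P(A x {y}) / p(y), written multiplicatively. *)
Definition label_shift (P Q : probability (X * label K)%type R) : Prop :=
  forall (A : set X) (y : label K), measurable A ->
    (Q (A `*` [set y]) * (label_marg P y)%:E = P (A `*` [set y]) * (label_marg Q y)%:E)%E.

Definition rho (pi : X -> label K -> R) (x : X) (y : label K) : R :=
  \sum_(y' | pi x y < pi x y') pi x y'.

Definition score (pi : X -> label K -> R) (x : X) (y : label K) (u : R) : R :=
  rho pi x y + u * pi x y.

Definition quantile (F : R -> R) (beta : R) : R := inf [set z | beta <= F z].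

Definition wcdf (n : nat) (w : label K -> R) (Ys : 'I_n -> label K)
    (rs : 'I_n -> R) (y : label K) (z : R) : R :=
  let S := \sum_(j < n) w (Ys j) + w y in
  \sum_(i < n) (w (Ys i) / S) * (rs i <= z)%R%:R + (w y / S) * (1 <= z)%R%:R.

Definition tau_star (n : nat) (alpha : R) (w : label K -> R) (Ys : 'I_n -> label K)
    (rs : 'I_n -> R) (y : label K) : R :=
  quantile (wcdf w Ys rs y) (1 - alpha).

Definition conf_set (n : nat) (alpha : R) (w : label K -> R) (pi : X -> label K -> R)
    (Ys : 'I_n -> label K) (rs : 'I_n -> R) (x : X) (u : R) : set (label K) :=
  [set y | rho pi x y + u * pi x y <= tau_star alpha w Ys rs y].

End defs.

Definition mutually_indep {R : realType} {dO : measure_display} {Om : measurableType dO}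
    {dT : measure_display} {T : measurableType dT} (Pr : probability Om R) (n : nat)
    (Zc : 'I_n -> Om -> T) (Zt : Om -> T) (Uc : 'I_n -> Om -> R) (Ut : Om -> R) : Prop :=
  forall (A : 'I_n -> set T) (At : set T) (B : 'I_n -> set R) (Bt : set R),
    (forall i, measurable (A i)) -> measurable At ->
    (forall i, measurable (B i)) -> measurable Bt ->
    Pr ((\bigcap_i (Zc i @^-1` A i)) `&` (Zt @^-1` At)
          `&` (\bigcap_i (Uc i @^-1` B i)) `&` (Ut @^-1` Bt))
    = (\prod_(i < n) Pr (Zc i @^-1` A i) * Pr (Zt @^-1` At)
        * \prod_(i < n) Pr (Uc i @^-1` B i) * Pr (Ut @^-1` Bt))%E.

From HB Require Import structures.
From mathcomp Require Import all_boot all_order all_algebra.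
From mathcomp Require Import all_classical all_reals all_analysis.
From mathcomp Require Import perm measurable_realfun.
Import Order.TTheory GRing.Theory Num.Theory.
Local Open Scope classical_set_scope.
Local Open Scope ring_scope.

(* Put the test point and the n calibration points, each with its uniform tie-breaker, into
   one (n+1)-tuple, the test point in coordinate 0. By independence and label shift the law of
   this tuple is w(y_0) times a law invariant under permutations of the coordinates, y_0 being
   the label in coordinate 0. So, on the event that the label vector is ys, swapping coordinates
   0 and k multiplies probabilities by w(ys_k)/w(ys_0). Call coordinate k strange when the
   coordinates with a strictly smaller score carry at least a (1 - alpha) share of the total
   weight W = sum_j w(ys_j). At most an alpha share of W is strange, so averaging the swap
   identity over k with weights w(ys_k)/W bounds the probability that the test point is strange
   by alpha. A test point that is not strange scores at most the weighted quantile tau*_w of its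
   own label, that is, it is covered. *)

Lemma ler_b2R {R : numDomainType} (a b : bool) : (a -> b) -> a%:R <= b%:R :> R.
Proof. by case: a; case: b => // /(_ isT). Qed.

Section weighted_mass.
Context {R : realDomainType} {I : finType} (m r : I -> R).
Hypothesis m_ge0 : forall i, 0 <= m i.

Definition wmass_below (t : R) : R := \sum_i m i * (r i < t)%R%:R.

(* Every strange index scores at least as high as the lowest-scoring strange one, below which
   lies weight at least [b * W]. *)
Lemma sum_strange_le (b : R) : b <= 1 ->
  \sum_k m k * (b * \sum_j m j <= wmass_below (r k))%R%:R <= (1 - b) * \sum_j m j.
Proof.
move=> b1; set W := \sum_j m j; set strange := fun k => b * W <= wmass_below (r k).
have [k0 sk0|none] := pickP strange; last first.
  rewrite big1 ?mulr_ge0 ?subr_ge0 ?sumr_ge0 // => k _.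
  by move: (none k); rewrite /strange => ->; rewrite mulr0.
have [kmin skmin kmin_le] := arg_minP r sk0.
apply: (@le_trans _ _ (\sum_k m k * (r kmin <= r k)%R%:R)).
  by apply: ler_sum => k _; apply/ler_wpM2l/ler_b2R/kmin_le.
have -> : \sum_k m k * (r kmin <= r k)%R%:R = W - wmass_below (r kmin).
  rewrite /W /wmass_below -sumrB; apply: eq_bigr => k _.
  by rewrite leNgt; case: (r k < r kmin); rewrite ?mulr0 ?mulr1 ?subr0 ?subrr.
by rewrite mulrBl mul1r lerB.
Qed.

End weighted_mass.

Section weighted_quantile.
Context {R : realType} {I : finType} (m r : I -> R).

Let wcdf_set (b : R) := [set z | b <= \sum_i (m i / \sum_j m j) * (r i <= z)%R%:R].

Lemma inf_wcdf_eq0 (b : R) : 0 < b -> \sum_j m j = 0 -> inf (wcdf_set b) = 0.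
Proof.
move=> b_gt0 W0; rewrite -[RHS](inf0 R); congr inf; apply/seteqP; split => // z.
by rewrite /wcdf_set /= W0 invr0 big1 => [|i _]; rewrite ?mulr0 ?mul0r // leNgt b_gt0.
Qed.

Hypothesis m_ge0 : forall i, 0 <= m i.

Lemma le_inf_wcdfP (b s : R) : 0 < b <= 1 -> 0 < \sum_j m j ->
  s <= inf (wcdf_set b) <-> wmass_below m r s < b * \sum_j m j.
Proof.
move=> /andP[b_gt0 b_le1] W_gt0; set W := \sum_j m j.
pose cdf z := \sum_i m i * (r i <= z)%R%:R.
have setE : wcdf_set b = [set z | b * W <= cdf z].
  apply/seteqP; split => z /=;
    by rewrite -ler_pdivlMr // /cdf mulr_suml; under eq_bigr do rewrite mulrAC.
have cdf_mass z t : (forall i, r i <= z -> r i < t) -> cdf z <= wmass_below m r t.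
  by move=> zt; apply: ler_sum => i _; apply/ler_wpM2l/ler_b2R/zt.
rewrite setE; split => [s_le|mass_lt].
- (* The largest score below [s] is then already in the set. *)
  rewrite ltNge; apply/negP => mass_ge.
  pose z := \big[Num.max/(s - 1)]_(i | r i < s) r i.
  have z_lt : z < s by apply: bigmax_lt => //; rewrite ltrBlDr ltrDl.
  have lb : has_lbound [set z | b * W <= cdf z].
    exists (\big[Num.min/0]_i r i) => t /= cdf_t; rewrite leNgt; apply/negP => t_lt.
    suff : cdf t = 0 by move=> cdf0; move: cdf_t; rewrite cdf0 leNgt pmulr_rgt0 // W_gt0.
    apply: big1 => i _; rewrite (_ : (r i <= t) = false) ?mulr0 //.
    by apply/negbTE; rewrite -ltNge (lt_le_trans t_lt) // bigmin_le.
  have Bz : b * W <= cdf z.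
    apply: (le_trans mass_ge); apply: ler_sum => i _; apply/ler_wpM2l/ler_b2R => // ri_lt.
    exact: le_bigmax_cond.
  by move: (le_trans s_le (ge_inf lb Bz)); rewrite leNgt z_lt.
- apply: lb_le_inf => [|z /= Bz].
    exists (\big[Num.max/0]_i r i) => /=.
    suff -> : cdf (\big[Num.max/0]_i r i) = W by rewrite ger_pMl.
    by apply: eq_bigr => i _; rewrite le_bigmax mulr1.
  rewrite leNgt; apply/negP => z_lt.
  have z_mass : cdf z <= wmass_below m r s by apply: cdf_mass => i /le_lt_trans; apply.
  by have := le_lt_trans (le_trans Bz z_mass) mass_lt; rewrite ltxx.
Qed.

End weighted_quantile.

Section tau_star_lift.
Context {R : realType} {K n : nat} (alpha : R) (w : label K -> R).
Context (ys : 'I_n.+1 -> label K) (r : 'I_n.+1 -> R).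

Lemma tau_star_liftE :
  tau_star alpha w (fun i => ys (lift ord0 i)) (fun i => r (lift ord0 i)) (ys ord0) =
  inf [set z | 1 - alpha <= \sum_j (w (ys j) / \sum_k w (ys k)) *
                              ((if j == ord0 then 1 else r j) <= z)%R%:R].
Proof.
have cdfE z : wcdf w (fun i => ys (lift ord0 i)) (fun i => r (lift ord0 i)) (ys ord0) z =
    \sum_j (w (ys j) / \sum_k w (ys k)) * ((if j == ord0 then 1 else r j) <= z)%R%:R.
  rewrite /wcdf /= [RHS]big_ord_recl big_ord_recl eqxx addrC [_ + w (ys ord0)]addrC.
  by congr (_ + _).
by rewrite /tau_star /quantile; congr inf; apply/funext => z; rewrite /= cdfE.
Qed.
End tau_star_lift.

Section score_bound.
Context {R : realType} {d : measure_display} {X : measurableType d} {K : nat}.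
Variables (pi : X -> label K -> R) (x : X).
Hypotheses (pi_ge0 : forall y, 0 <= pi x y) (pi_sum1 : \sum_y pi x y = 1).

Lemma rho_add_le1 y : rho pi x y + pi x y <= 1.
Proof.
rewrite -pi_sum1 (bigD1 y) //= [leRHS]addrC lerD2r /rho big_mkcond [leRHS]big_mkcond /=.
apply: ler_sum => y' _; case: ifPn => [lt_y|_]; last by case: ifP.
by rewrite (_ : y' != y) //; apply: contraTneq lt_y => ->; rewrite ltxx.
Qed.

Lemma score_le1 y u : u <= 1 -> score pi x y u <= 1.
Proof. by move=> u_le1; apply: le_trans (rho_add_le1 y); rewrite lerD2l ler_piMl. Qed.

End score_bound.

Section tuple_permutation.
Context {T : Type} {n : nat}.

Definition permt (s : 'S_n) (v : n.-tuple T) : n.-tuple T := [tuple tnth v (s j) | j < n].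

Lemma tnth_permt s v j : tnth (permt s v) j = tnth v (s j).
Proof. exact: tnth_mktuple. Qed.

End tuple_permutation.

Lemma measurable_permt {d} {T : measurableType d} {n} (s : 'S_n) :
  measurable_fun setT (@permt T n s).
Proof.
apply/measurable_fun_tnthP => j; rewrite (_ : _ \o _ = fun v => tnth v (s j)).
  exact: measurable_tnth.
by apply/funext => v /=; rewrite tnth_permt.
Qed.

HB.instance Definition _ {d} {T : measurableType d} {n} (s : 'S_n) :=
  isMeasurableFun.Build _ _ _ _ (@permt T n s) (measurable_permt s).

Section tuple_rectangles.
Context {d1 d2 : measure_display} {T1 : measurableType d1} {T2 : measurableType d2}.
Context {n : nat}.
Local Notation tT := (n.-tuple (T1 * T2)).

Definition rect (A : 'I_n -> set T1) (B : 'I_n -> set T2) : set tT :=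
  [set v | forall j, A j (tnth v j).1 /\ B j (tnth v j).2].

Definition measurable_rects : set (set tT) :=
  [set rect A B | A in [set A | forall j, measurable (A j)]
                & B in [set B | forall j, measurable (B j)]].

Lemma measurable_rect A B : (forall j, measurable (A j)) -> (forall j, measurable (B j)) ->
  measurable (rect A B).
Proof.
move=> mA mB.
have -> : rect A B = \bigcap_(j in setT) ((fun v : tT => tnth v j) @^-1` (A j `*` B j)).
  by apply/seteqP; split => v /= v_AB j; [move=> _|]; apply: v_AB.
apply: fin_bigcap_measurable; first exact: finite_finset.
by move=> j _; rewrite -[X in measurable X]setTI; apply: measurable_tnth => //; exact: measurableX.
Qed.

Lemma rectI A B A' B' :
  rect A B `&` rect A' B' = rect (fun j => A j `&` A' j) (fun j => B j `&` B' j).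
Proof.
apply/seteqP; split => v /=.
  by move=> [vAB vAB'] j; have [? ?] := vAB j; have [? ?] := vAB' j.
by move=> vAB; split => j; have [[? ?] [? ?]] := vAB j.
Qed.

Lemma setI_closed_rects : setI_closed measurable_rects.
Proof.
move=> _ _ [A mA [B mB <-]] [A' mA' [B' mB' <-]]; rewrite rectI.
by exists (fun j => A j `&` A' j) => [j|]; last exists (fun j => B j `&` B' j) => // j;
  apply: measurableI.
Qed.

Lemma measurable_rectsE : measurable = <<s measurable_rects >>.
Proof.
apply/seteqP; split; last first.
  apply: smallest_sub; first exact: sigma_algebra_measurable.
  by move=> _ [A mA [B mB <-]]; apply: measurable_rect.
apply: smallest_sub; first exact: smallest_sigma_algebra.
rewrite -bigcup_seq => _ [j _ [C mC <-]].
suff : <<s [set A `*` B | A in measurable & B in measurable] >> `<=`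
       image_set_system setT (fun v : tT => tnth v j) <<s measurable_rects >>.
  by apply; rewrite -measurable_prod_measurableType.
apply: smallest_sub; first exact/sigma_algebra_image/smallest_sigma_algebra.
move=> _ [A mA [B mB <-]]; apply: sub_sigma_algebra.
exists (fun l => if l == j then A else setT) => [l|]; first by case: ifP.
exists (fun l => if l == j then B else setT) => [l|]; first by case: ifP.
apply/seteqP; split => v /=; last by move=> [_ [vA vB]] l; case: eqP => [->|].
by move=> vAB; split => //; have := vAB j; rewrite eqxx.
Qed.

Lemma rect_measure_unique {R : realType} (m1 m2 : {measure set tT -> \bar R}) :
  (m1 setT < +oo)%E ->
  (forall A B, (forall j, measurable (A j)) -> (forall j, measurable (B j)) ->
     m1 (rect A B) = m2 (rect A B)) ->
  forall S, measurable S -> m1 S = m2 S.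
Proof.
move=> m1_fin m12; apply: (measure_unique _ (fun=> setT) measurable_rectsE setI_closed_rects).
- by move=> _; exists (fun=> setT) => //; exists (fun=> setT) => //; apply/seteqP.
- by apply/seteqP; split => // v _; exists 0%N.
- by move=> _ [A mA [B mB <-]]; apply: m12.
- by [].
Qed.

Lemma permt_rect (s : 'S_n) A B :
  permt s @^-1` rect A B = rect (fun j => A (s^-1 j)%g) (fun j => B (s^-1 j)%g).
Proof.
apply/seteqP; split => v /= vAB j.
  by have := vAB (s^-1 j)%g; rewrite tnth_permt permKV.
by rewrite tnth_permt; have := vAB (s j); rewrite permK.
Qed.

End tuple_rectangles.

Lemma le_measure_weighted_sum {d} {T : measurableType d} {R : realType}
    (mu : {measure set T -> \bar R}) {I : finType} (c : I -> R) (A : I -> set T)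
    (b : R) (B : set T) :
  (forall i, 0 <= c i) -> 0 <= b -> (forall i, measurable (A i)) -> measurable B ->
  (forall x, \sum_i c i * \1_(A i) x <= b * \1_B x) ->
  (\sum_i (c i)%:E * mu (A i) <= b%:E * mu B)%E.
Proof.
move=> c_ge0 b_ge0 mA mB cA_le.
have mind (k : R) (S : set T) : measurable S -> measurable_fun setT (fun x => (k * \1_S x)%:E).
  move=> mS; apply/measurable_EFinP; apply: measurable_funM.
    exact: measurable_cst.
  exact: measurable_indic.
have scaleE (k : R) (S : set T) : 0 <= k -> measurable S ->
    (k%:E * mu S = \int[mu]_x (k * \1_S x)%:E)%E.
  move=> k_ge0 mS; under eq_integral do rewrite EFinM.
  rewrite ge0_integralZl_EFin ?integral_indic ?setIT //.
  exact/measurable_EFinP/measurable_indic.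
under eq_bigr do rewrite scaleE //.
rewrite scaleE // -ge0_integral_sum //; first last.
- by move=> i x _; rewrite lee_fin mulr_ge0 // indicE ler0n.
- by move=> i; apply: mind.
apply: ge0_le_integral => [//|x _|||x _].
- by rewrite sumEFin lee_fin; apply: sumr_ge0 => i _; rewrite mulr_ge0 // indicE ler0n.
- by apply: emeasurable_sum => i; apply: mind.
- exact: mind.
- by rewrite sumEFin lee_fin.
Qed.

Section measurable_bool.
Context {d : measure_display} {T : measurableType d} {R : realType}.

Lemma measurable_setb (f : T -> bool) : measurable_fun setT f -> measurable [set x | f x].
Proof.
move=> mf; have := mf measurableT [set true] I; rewrite setTI.
by congr measurable; apply/seteqP; split => x /=.
Qed.

Lemma measurable_fun_natr_bool (f : T -> bool) :
  measurable_fun setT f -> measurable_fun setT (fun x => (f x)%:R : R).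
Proof.
move=> mf; rewrite (_ : (fun x => _) = fun x => if f x then 1 else 0).
  by apply: measurable_fun_ifT => //; exact: measurable_cst.
by apply/funext => x; case: (f x).
Qed.

Lemma measurable_wmass_below {I : finType} (m : I -> R) (r : I -> T -> R) (t : T -> R) :
  (forall i, measurable_fun setT (r i)) -> measurable_fun setT t ->
  measurable_fun setT (fun x => wmass_below m (fun i => r i x) (t x)).
Proof.
move=> mr mt; apply: measurable_sum => i; apply: measurable_funM; first exact: measurable_cst.
by apply/measurable_fun_natr_bool/measurable_fun_ltr.
Qed.

End measurable_bool.

Section label_vectors.
Context {d : measure_display} {X : measurableType d} {K : nat}.

Definition labset (c : label K) : set (X * label K) := [set z | z.2 = c].

Lemma measurable_labset c : measurable (labset c).
Proof.
have -> : labset c = setT `*` [set c] by apply/seteqP; split => -[x y] //= [].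
exact: measurableX.
Qed.

Context {d2 : measure_display} {T2 : measurableType d2} {m : nat}.
Local Notation tT := (m.-tuple ((X * label K) * T2)).

Definition labels (v : tT) : {ffun 'I_m -> label K} := [ffun j => (tnth v j).1.2].

Definition with_labels (ys : {ffun 'I_m -> label K}) : set tT :=
  rect (fun j => labset (ys j)) (fun=> setT).

Lemma with_labelsP ys v : with_labels ys v <-> labels v = ys.
Proof.
split => [v_ys|<- j]; last by rewrite ffunE.
by apply/ffunP => j; rewrite ffunE; case: (v_ys j).
Qed.

Lemma measurable_with_labels ys : measurable (with_labels ys).
Proof. by apply: measurable_rect => // j; apply: measurable_labset. Qed.

Lemma measure_label_partition {R : realType} (mu : {measure set tT -> \bar R}) S :
  measurable S -> mu S = (\sum_ys mu (S `&` with_labels ys))%E.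
Proof.
move=> mS; have S_cover : \bigcup_(ys in setT) (S `&` with_labels ys) = S.
  apply/seteqP; split => [v [ys _ []] //|v Sv].
  by exists (labels v) => //; split => //; apply/with_labelsP.
rewrite -[in LHS]S_cover measure_fin_bigcup //.
- rewrite (fsbigE (index_enum _)) ?index_enum_uniq //; last by move=> ys _; rewrite mem_index_enum.
  by under eq_bigl do rewrite in_setT.
- exact: finite_finset.
- apply/trivIsetP => ys ys' _ _ ys_neq; apply/seteqP; split => // v [[_ /with_labelsP v_ys]].
  by move=> [_ /with_labelsP v_ys']; move: ys_neq; rewrite -v_ys -v_ys' eqxx.
- by move=> ys _; apply: measurableI => //; apply: measurable_with_labels.
Qed.

Lemma permt_with_labels (s : 'S_m) ys :
  permt s @^-1` with_labels ys = with_labels [ffun j => ys (s^-1 j)%g].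
Proof. by rewrite /with_labels permt_rect; congr rect; apply/funext => j; rewrite ffunE. Qed.

Lemma measurable_by_labels (S : set tT) :
  (forall ys, measurable (S `&` with_labels ys)) -> measurable S.
Proof.
move=> mS; have -> : S = \bigcup_(ys in setT) (S `&` with_labels ys).
  apply/seteqP; split => [v Sv|v [ys _ []] //].
  by exists (labels v) => //; split => //; apply/with_labelsP.
by apply: fin_bigcup_measurable => //; exact: finite_finset.
Qed.

End label_vectors.

Lemma lratio_ge0 {R : realType} {d : measure_display} {X : measurableType d} {K : nat}
    (P Q : probability (X * label K)%type R) y : 0 <= lratio P Q y.
Proof. by rewrite /lratio divr_ge0 // fine_ge0 // measure_ge0. Qed.

Section label_shift.
Context {R : realType} {d : measure_display} {X : measurableType d} {K : nat}.
Context {P Q : probability (X * label K)%type R}.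
Hypotheses (shift : label_shift P Q) (p_gt0 : forall y, 0 < label_marg P y).
Local Notation w := (lratio P Q).

Lemma label_shift_lratio A c : measurable A -> A `<=` labset c -> Q A = ((w c)%:E * P A)%E.
Proof.
move=> mA Ac; have Aslice : A = ysection A c `*` [set c].
  apply/seteqP; split => [[x y] Axy|[x y] [/= Axc ->]].
    have yc : y = c by apply: Ac Axy.
    by split => //=; rewrite /ysection /= inE -yc.
  by move: Axc; rewrite /ysection /= inE.
have mAc : measurable (ysection A c) by apply: measurable_ysection.
have := shift _ c mAc; rewrite -Aslice.
rewrite -[Q A]fineK ?fin_num_measure // -[P A]fineK ?fin_num_measure // -!EFinM.
move=> /(congr1 fine) /= eqA.
congr (_%:E); rewrite /lratio mulrAC [label_marg Q c * _]mulrC -eqA mulfK //.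
exact: lt0r_neq0.
Qed.

End label_shift.

Section tuple_scores.
Context {R : realType} {d : measure_display} {X : measurableType d} {K m : nat}.
Variables (pi : X -> label K -> R) (w : label K -> R).
Local Notation tT := (m.-tuple ((X * label K) * R)).

Definition score_at (j : 'I_m) (v : tT) : R :=
  score pi (tnth v j).1.1 (labels v j) (tnth v j).2.

Definition strange (beta : R) (k : 'I_m) : set tT :=
  [set v | beta * \sum_j w (labels v j) <=
           wmass_below (fun j => w (labels v j)) (fun j => score_at j v) (score_at k v)].

Lemma labels_permt (s : 'S_m) (v : tT) j : labels (permt s v) j = labels v (s j).
Proof. by rewrite !ffunE tnth_permt. Qed.

Lemma score_at_permt (s : 'S_m) j (v : tT) : score_at j (permt s v) = score_at (s j) v.
Proof. by rewrite /score_at labels_permt tnth_permt. Qed.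

Lemma permt_strange beta (s : 'S_m) k : permt s @^-1` strange beta k = strange beta (s k).
Proof.
have reindex (F : 'I_m -> R) : \sum_j F (s j) = \sum_j F j.
  by rewrite [RHS](reindex_inj (@perm_inj _ s)).
apply/seteqP; split => v; rewrite /strange /wmass_below /=;
  rewrite -(reindex (fun j => w (labels v j)))
          -(reindex (fun j => w (labels v j) * (score_at j v < score_at (s k) v)%R%:R));
  by congr (_ <= _); [congr (_ * _)|]; apply: eq_bigr => j _;
     rewrite labels_permt ?score_at_permt.
Qed.

Hypothesis pi_meas : forall y, measurable_fun setT (fun x => pi x y).

Lemma measurable_score_label j y :
  measurable_fun setT (fun v : tT => score pi (tnth v j).1.1 y (tnth v j).2).
Proof.
have mx : measurable_fun setT (fun v : tT => (tnth v j).1.1).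
  by apply: measurableT_comp => //; apply: measurableT_comp => //; exact: measurable_tnth.
have mu : measurable_fun setT (fun v : tT => (tnth v j).2).
  by apply: measurableT_comp => //; exact: measurable_tnth.
have mrho : measurable_fun setT (fun x => rho pi x y).
  rewrite /rho; under eq_fun do rewrite big_mkcond /=.
  apply: measurable_sum => y'.
  by apply: measurable_fun_ifT; [exact: measurable_fun_ltr|exact: pi_meas|exact: measurable_cst].
apply: measurable_funD; first exact: measurableT_comp mrho mx.
by apply: measurable_funM => //; exact: measurableT_comp (pi_meas y) mx.
Qed.

Lemma measurable_strange beta k : measurable (strange beta k).
Proof.
apply: measurable_by_labels => ys.
pose sc j (v : tT) := score pi (tnth v j).1.1 (ys j) (tnth v j).2.
have -> : strange beta k `&` with_labels ys =
    [set v | beta * \sum_j w (ys j) <= wmass_below (fun j => w (ys j)) (fun j => sc j v) (sc k v)]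
    `&` with_labels ys.
  by apply/seteqP; split => v [Sv /[dup] /with_labelsP v_ys ?]; split => //;
    move: Sv; rewrite /strange /score_at /= v_ys.
apply: measurableI; last exact: measurable_with_labels.
apply/measurable_setb/measurable_fun_ler; first exact: measurable_cst.
by apply: measurable_wmass_below => *; apply: measurable_score_label.
Qed.

End tuple_scores.

Section coverage.
Context {R : realType} {d : measure_display} {X : measurableType d} {K n : nat}.
Variables (pi : X -> label K -> R) (w : label K -> R) (alpha : R).
Hypotheses (w_ge0 : forall y, 0 <= w y) (alpha01 : 0 < alpha < 1).
Local Notation tT := (n.+1.-tuple ((X * label K) * R)).

Definition covered : set tT :=
  [set v | conf_set alpha w pi (fun i => labels v (lift ord0 i))
             (fun i => score_at pi (lift ord0 i) v) (tnth v ord0).1.1 (tnth v ord0).2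
             (labels v ord0)].

(* When all weights vanish, [tau_star] is the junk value [inf set0 = 0]. *)
Lemma coveredE v : covered v <->
  if 0 < \sum_j w (labels v j) then
    wmass_below (fun j => w (labels v j)) (fun j => if j == ord0 then 1 else score_at pi j v)
      (score_at pi ord0 v) < (1 - alpha) * \sum_j w (labels v j)
  else score_at pi ord0 v <= 0.
Proof.
have [alpha_gt0 alpha_lt1] := andP alpha01.
rewrite /covered /conf_set /= (tau_star_liftE alpha w (labels v) (fun j => score_at pi j v)).
case: ifPn => [W_gt0|W_le0]; first by apply: le_inf_wcdfP; rewrite // subr_gt0 alpha_lt1 gerBl ltW.
rewrite inf_wcdf_eq0 ?subr_gt0 //; apply/eqP; rewrite eq_le leNgt W_le0 /=.
by apply: sumr_ge0 => j _.
Qed.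

Hypothesis pi_meas : forall y, measurable_fun setT (fun x => pi x y).

Lemma measurable_covered : measurable covered.
Proof.
apply: measurable_by_labels => ys.
pose sc j (v : tT) := score pi (tnth v j).1.1 (ys j) (tnth v j).2.
have -> : covered `&` with_labels ys =
    [set v | if 0 < \sum_j w (ys j) then
               wmass_below (fun j => w (ys j)) (fun j => if j == ord0 then 1 else sc j v)
                 (sc ord0 v) < (1 - alpha) * \sum_j w (ys j)
             else sc ord0 v <= 0] `&` with_labels ys.
  apply/seteqP; split => v [v_cov v_lab]; have /with_labelsP v_ys := v_lab.
    by split => //; move/coveredE: v_cov; rewrite /score_at v_ys.
  by split => //; apply/coveredE; rewrite /score_at v_ys.
apply: measurableI; last exact: measurable_with_labels.
apply: measurable_setb; case: (0 < _); last first.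
  by apply: measurable_fun_ler; [exact: measurable_score_label|exact: measurable_cst].
apply: measurable_fun_ltr; last exact: measurable_cst.
apply: measurable_wmass_below => [j|]; last exact: measurable_score_label.
by case: (j == ord0); [exact: measurable_cst|exact: measurable_score_label].
Qed.

Hypotheses (pi_ge0 : forall x y, 0 <= pi x y) (pi_sum1 : forall x, \sum_y pi x y = 1).

Lemma covered_of_not_strange v :
  (tnth v ord0).2 <= 1 -> ~ strange pi w (1 - alpha) ord0 v -> covered v.
Proof.
move=> u_le1 /negP; rewrite -ltNge => mass_lt; apply/coveredE.
have mass_ge0 : 0 <= wmass_below (fun j => w (labels v j)) (fun j => score_at pi j v)
                                 (score_at pi ord0 v).
  by apply: sumr_ge0 => j _; rewrite mulr_ge0.
have [alpha_gt0 alpha_lt1] := andP alpha01.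
have -> : 0 < \sum_j w (labels v j).
  by rewrite -(pmulr_rgt0 _ (_ : 0 < 1 - alpha)) ?subr_gt0 // (le_lt_trans mass_ge0).
apply: le_lt_trans mass_lt; rewrite /wmass_below !big_ord_recl /= ltxx.
by rewrite ltNge score_le1 // mulr0.
Qed.

End coverage.

Section conformal_coverage.
Context {R : realType} {d : measure_display} {X : measurableType d} {K : nat}.
Variables (P Q : probability (X * label K)%type R) (pi : X -> label K -> R).
Context {dO : measure_display} {Om : measurableType dO}.
Variables (Pr : probability Om R) (n : nat).
Variables (Zc : 'I_n -> Om -> (X * label K)%type) (Zt : Om -> (X * label K)%type).
Variables (Uc : 'I_n -> Om -> R) (Ut : Om -> R).

Local Notation ZT := (X * label K)%type.
Local Notation TT := (n.+1.-tuple (ZT * R)).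
Local Notation LT := {ffun 'I_n.+1 -> label K}.
Local Notation w := (lratio P Q).
Local Notation Unif := (uniform_prob (@ltr01 R)).

(* Coordinate [ord0] holds the test point, coordinate [lift ord0 i] the i-th calibration point. *)
Definition obs (j : 'I_n.+1) (om : Om) : ZT * R :=
  if unlift ord0 j is Some i then (Zc i om, Uc i om) else (Zt om, Ut om).

Definition sample (om : Om) : TT := [tuple obs j om | j < n.+1].

Lemma tnth_sample om j : tnth (sample om) j = obs j om.
Proof. exact: tnth_mktuple. Qed.

Lemma sample_coveredE alpha :
  [set om | conf_set alpha w pi (fun i => (Zc i om).2)
              (fun i => score pi (Zc i om).1 (Zc i om).2 (Uc i om)) (Zt om).1 (Ut om) (Zt om).2]
  = sample @^-1` covered pi w alpha.
Proof.
apply/funext => om; rewrite /preimage /covered /score_at /=.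
have tnth0 : tnth (sample om) ord0 = (Zt om, Ut om) by rewrite tnth_sample /obs unlift_none.
have tnthS i : tnth (sample om) (lift ord0 i) = (Zc i om, Uc i om).
  by rewrite tnth_sample /obs liftK.
by congr conf_set; try apply/funext => i; rewrite ?ffunE ?tnth0 ?tnthS.
Qed.

Hypotheses (mZc : forall i, measurable_fun setT (Zc i)) (mZt : measurable_fun setT Zt).
Hypotheses (mUc : forall i, measurable_fun setT (Uc i)) (mUt : measurable_fun setT Ut).

Lemma measurable_sample : measurable_fun setT sample.
Proof.
apply/measurable_fun_tnthP => j; rewrite (_ : _ \o _ = obs j).
  by rewrite /obs; case: (unlift ord0 j) => [i|]; exact: measurable_fun_pair.
by apply/funext => om /=; rewrite tnth_sample.
Qed.

HB.instance Definition _ := isMeasurableFun.Build _ _ _ _ sample measurable_sample.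

Local Notation law := (distribution Pr sample).

Lemma sample_rectE A B : sample @^-1` rect A B =
  \bigcap_i (Zc i @^-1` A (lift ord0 i)) `&` Zt @^-1` A ord0
  `&` \bigcap_i (Uc i @^-1` B (lift ord0 i)) `&` Ut @^-1` B ord0.
Proof.
apply/seteqP; split => om /=.
  move=> om_AB; have := om_AB ord0; rewrite tnth_sample /obs unlift_none => -[A0 B0].
  split; [split; [split|]|] => // i _; have := om_AB (lift ord0 i);
    by rewrite tnth_sample /obs liftK => -[].
move=> [[[omA omA0] omB] omB0] j; rewrite tnth_sample /obs.
by case: unliftP => [i ->|->]; rewrite ?liftK ?unlift_none //; split; [apply: omA|apply: omB].
Qed.

Hypotheses (shift : label_shift P Q) (p_gt0 : forall y, 0 < label_marg P y).
Hypotheses (lawZc : forall i A, measurable A -> Pr (Zc i @^-1` A) = P A).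
Hypotheses (lawZt : forall A, measurable A -> Pr (Zt @^-1` A) = Q A).
Hypotheses (lawUc : forall i B, measurable B -> Pr (Uc i @^-1` B) = Unif B).
Hypotheses (lawUt : forall B, measurable B -> Pr (Ut @^-1` B) = Unif B).
Hypothesis indep : mutually_indep Pr Zc Zt Uc Ut.

Lemma law_rect A B c : (forall j, measurable (A j)) -> (forall j, measurable (B j)) ->
  A ord0 `<=` labset c ->
  law (rect A B) = ((w c)%:E * \prod_j P (A j) * \prod_j Unif (B j))%E.
Proof.
move=> mA mB A0c; rewrite /distribution /pushforward sample_rectE indep //.
rewrite lawZt // (label_shift_lratio shift p_gt0 _ _ (mA ord0) A0c) lawUt //.
under eq_bigr do rewrite lawZc //; under [X in (_ * _ * X * _)%E]eq_bigr do rewrite lawUc //.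
rewrite (big_ord_recl _ (fun j => P (A j))) (big_ord_recl _ (fun j => Unif (B j))).
rewrite (muleC (Unif (B ord0))) muleA [in RHS]muleA; congr (_ * _ * _)%E.
by rewrite [LHS]muleC [(_ * (w c)%:E)%E]muleC [RHS]muleCA.
Qed.

Lemma law_with_labels_eq0 (ys : LT) : w (ys ord0) = 0 -> law (with_labels ys) = 0%E.
Proof.
move=> w0; have := @law_rect (fun j => labset (ys j)) (fun=> setT) (ys ord0).
rewrite w0 !mul0e; apply => // j; exact: measurable_labset.
Qed.

(* Both sides are finite measures in [S] that agree on rectangles, by [law_rect]. *)
Lemma law_permt (ys : LT) (s : 'S_n.+1) S : measurable S ->
  ((w (ys (s^-1 ord0)%g))%:E * law (S `&` with_labels ys) =
   (w (ys ord0))%:E * law (permt s @^-1` (S `&` with_labels ys)))%E.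
Proof.
pose m1 := mscale (NngNum (lratio_ge0 P Q (ys (s^-1 ord0)%g)))
                  (mrestr law (measurable_with_labels ys)).
pose m2 := mscale (NngNum (lratio_ge0 P Q (ys ord0)))
                  (mrestr (distribution law (permt s)) (measurable_with_labels ys)).
have m1E S' : m1 S' = ((w (ys (s^-1 ord0)%g))%:E * law (S' `&` with_labels ys))%E by [].
have m2E S' : m2 S' = ((w (ys ord0))%:E * law (permt s @^-1` (S' `&` with_labels ys)))%E by [].
have m1_fin : (m1 setT < +oo)%E.
  rewrite m1E -[law _]fineK ?fin_num_measure //; first exact: ltry.
  by apply: measurableI => //; apply: measurable_with_labels.
have m12 A B : (forall j, measurable (A j)) -> (forall j, measurable (B j)) ->
    m1 (rect A B) = m2 (rect A B).
  move=> mA mB; have mAys j : measurable (A j `&` labset (ys j)).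
    by apply: measurableI; last exact: measurable_labset.
  have mBT j : measurable (B j `&` setT) by apply: measurableI.
  have reindex (F : 'I_n.+1 -> \bar R) : (\prod_j F (s^-1 j)%g = \prod_j F j)%E.
    by rewrite [RHS](reindex_inj (@perm_inj _ s^-1)).
  rewrite m1E m2E rectI permt_rect.
  rewrite (law_rect _ _ (ys ord0)) // (law_rect _ _ (ys (s^-1 ord0)%g)) //.
  rewrite (reindex (fun j => P (A j `&` labset (ys j)))) (reindex (fun j => Unif (B j `&` setT))).
  by rewrite !muleA (muleC (w (ys ord0))%:E).
exact: (rect_measure_unique m1 m2 m1_fin m12).
Qed.

Definition plaw (S : set TT) : R := fine (law S).

Lemma plawE S : measurable S -> law S = (plaw S)%:E.
Proof. by move=> mS; rewrite fineK ?fin_num_measure. Qed.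

Variable alpha : R.
Hypothesis alpha01 : 0 < alpha < 1.
Hypothesis pi_meas : forall y, measurable_fun setT (fun x => pi x y).
Local Notation strange := (strange pi w (1 - alpha)).

Let measurable_strange_labels (ys : LT) k : measurable (strange k `&` with_labels ys).
Proof.
by apply: measurableI; [exact: measurable_strange|exact: measurable_with_labels].
Qed.

Lemma plaw_strange_le (ys : LT) k :
  plaw (strange k `&` with_labels ys) <= plaw (with_labels ys).
Proof.
apply: fine_le; rewrite ?fin_num_measure //; try exact: measurable_with_labels.
by apply: le_measure; rewrite ?inE //; exact: measurable_with_labels.
Qed.

Definition swap0 k (ys : LT) : LT := [ffun j => ys (tperm ord0 k j)].

Lemma swap0K k : involutive (swap0 k).
Proof. by move=> ys; apply/ffunP => j; rewrite !ffunE tpermK. Qed.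

Lemma sum_swap0 k ys : \sum_j w (swap0 k ys j) = \sum_j w (ys j).
Proof.
rewrite [RHS](reindex_inj (@perm_inj _ (tperm ord0 k))).
by apply: eq_bigr => j _; rewrite ffunE.
Qed.

Lemma lratio_plaw_strange_swap (ys : LT) k :
  w (ys k) * plaw (strange ord0 `&` with_labels ys) =
  w (ys ord0) * plaw (strange k `&` with_labels (swap0 k ys)).
Proof.
have := law_permt ys (tperm ord0 k) _ (measurable_strange pi w pi_meas (1 - alpha) ord0).
rewrite tpermV tpermL preimage_setI permt_strange permt_with_labels tpermV tpermL.
by rewrite !plawE // -!EFinM => /(congr1 fine).
Qed.

Lemma sum_lratio_plaw_strange_le (ys : LT) :
  \sum_k w (ys k) * plaw (strange k `&` with_labels ys) <=
  alpha * (\sum_j w (ys j)) * plaw (with_labels ys).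
Proof.
have [alpha_gt0 alpha_lt1] := andP alpha01.
suff : (\sum_k (w (ys k))%:E * law (strange k `&` with_labels ys) <=
        (alpha * \sum_j w (ys j))%:E * law (with_labels ys))%E.
  rewrite plawE; last exact: measurable_with_labels.
  under eq_bigr do rewrite plawE // -EFinM.
  by rewrite -EFinM sumEFin lee_fin.
apply: le_measure_weighted_sum => [k||k||v].
- exact: lratio_ge0.
- by apply: mulr_ge0; [exact: ltW|apply: sumr_ge0 => j _; exact: lratio_ge0].
- exact: measurable_strange_labels.
- exact: measurable_with_labels.
have [v_ys|v_ys] := pselect (with_labels ys v); last first.
  rewrite indicE memNset // mulr0 big1 // => k _.
  by rewrite indicE memNset ?mulr0 // => -[].
under eq_bigr do rewrite indicE in_setI (mem_set v_ys) andbT.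
rewrite indicE mem_set // mulr1 -[alpha in leRHS](subKr 1); move/with_labelsP: v_ys => <-.
have b_le1 : 1 - alpha <= 1 by rewrite lerBlDr lerDl ltW.
apply: le_trans (sum_strange_le _ (fun j => score_at pi j v)
                  (fun j => lratio_ge0 P Q (labels v j)) _ b_le1).
by apply: ler_sum => k _; rewrite ler_wpM2l ?lratio_ge0 //; apply: ler_b2R => /set_mem.
Qed.

Lemma sum_plaw_with_labels : \sum_(ys : LT) plaw (with_labels ys) = 1.
Proof.
have : law setT = (\sum_ys law (setT `&` with_labels ys))%E.
  exact: measure_label_partition.
rewrite probability_setT.
under eq_bigr => ys _ do rewrite setTI (plawE _ (measurable_with_labels ys)).
by rewrite sumEFin => /(congr1 fine) /= <-.
Qed.

Lemma plaw_strange0E (ys : LT) : plaw (strange ord0 `&` with_labels ys) =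
  (\sum_j w (ys j))^-1 * \sum_k w (ys ord0) * plaw (strange k `&` with_labels (swap0 k ys)).
Proof.
have [W0|W_neq0] := eqVneq (\sum_j w (ys j)) 0; last first.
  by rewrite -(eq_bigr _ (fun k _ => lratio_plaw_strange_swap ys k)) -mulr_suml mulKf.
rewrite W0 invr0 mul0r; apply/eqP; rewrite eq_le fine_ge0 ?measure_ge0 // andbT.
have w0 : w (ys ord0) = 0 by move/psumr_eq0P : W0; apply => // j _; apply: lratio_ge0.
by apply: (le_trans (plaw_strange_le _ _)); rewrite /plaw law_with_labels_eq0.
Qed.

(* Reindexing the label vectors by [swap0 k] moves coordinate [k] into the test position. *)
Lemma sum_plaw_strange0_le : \sum_(ys : LT) plaw (strange ord0 `&` with_labels ys) <= alpha.
Proof.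
pose W (ys : LT) := \sum_j w (ys j).
have swap_sum k : \sum_ys (W ys)^-1 * (w (ys ord0) * plaw (strange k `&` with_labels (swap0 k ys)))
                = \sum_ys (W ys)^-1 * (w (ys k) * plaw (strange k `&` with_labels ys)).
  rewrite (reindex_inj (can_inj (swap0K k))) /=.
  by apply: eq_bigr => ys _; rewrite /W sum_swap0 swap0K ffunE tpermL.
under eq_bigr do rewrite plaw_strange0E mulr_sumr.
rewrite exchange_big /=; under eq_bigr do rewrite swap_sum.
rewrite exchange_big /=.
apply: (@le_trans _ _ (\sum_ys alpha * plaw (with_labels ys))); last first.
  by rewrite -mulr_sumr sum_plaw_with_labels mulr1.
apply: ler_sum => ys _; rewrite -mulr_sumr.
have [W0|W_neq0] := eqVneq (W ys) 0.
  by rewrite W0 invr0 mul0r mulr_ge0 ?fine_ge0 ?measure_ge0 // ltW // (andP alpha01).1.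
rewrite -[leRHS](mulKf W_neq0) [W ys * _]mulrCA [alpha * _]mulrA ler_wpM2l ?invr_ge0 //.
  by apply: sumr_ge0 => j _; exact: lratio_ge0.
exact: sum_lratio_plaw_strange_le.
Qed.

Lemma law_strange0_le : (law (strange ord0) <= alpha%:E)%E.
Proof.
have -> : law (strange ord0) = (\sum_ys law (strange ord0 `&` with_labels ys))%E.
  by apply: measure_label_partition; exact: measurable_strange.
by under eq_bigr do rewrite plawE //; rewrite sumEFin lee_fin sum_plaw_strange0_le.
Qed.

Hypotheses (pi_ge0 : forall x y, 0 <= pi x y) (pi_sum1 : forall x, \sum_y pi x y = 1).

Lemma Pr_sample_covered_ge : ((1 - alpha)%:E <= Pr (sample @^-1` covered pi w alpha))%E.
Proof.
have mpre S : measurable S -> measurable (sample @^-1` S).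
  by move=> mS; rewrite -[X in measurable X]setTI; exact: measurable_sample.
have mcov : measurable (sample @^-1` covered pi w alpha).
  exact: mpre (measurable_covered _ _ _ (lratio_ge0 P Q) alpha01 pi_meas).
have mstrange : measurable (sample @^-1` strange ord0).
  exact: mpre (measurable_strange _ _ pi_meas _ _).
pose U01 := Ut @^-1` `[0%R, 1%R].
have mU01 : measurable U01 by rewrite -[X in measurable X]setTI; apply: mUt => //.
have PU01 : Pr U01 = 1%E by rewrite lawUt // /uniform_prob integral_uniform_pdf1.
have U01_sub : U01 `<=` sample @^-1` covered pi w alpha `|` sample @^-1` strange ord0.
  move=> om; rewrite /U01 /= in_itv /= => /andP[_ u_le1].
  have [|not_strange] := pselect (strange ord0 (sample om)); [by right|left].
  apply: covered_of_not_strange => //; first exact: lratio_ge0.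
  by rewrite tnth_sample /obs unlift_none.
have : (1 <= Pr (sample @^-1` covered pi w alpha) + law (strange ord0))%E.
  rewrite -PU01; apply: le_trans (measureU2 _ mcov mstrange).
  by apply: le_measure; rewrite ?inE //; exact: measurableU.
move/le_trans => /(_ _ (leeD2l _ law_strange0_le)).
by rewrite -[Pr _]fineK ?fin_num_measure // -EFinD !lee_fin lerBlDr.
Qed.

End conformal_coverage.

Theorem theorem2 (R : realType) (d : measure_display) (X : measurableType d) (K : nat)
  (P Q : probability (X * label K)%type R)
  (pi : X -> label K -> R)
  (dO : measure_display) (Om : measurableType dO) (Pr : probability Om R) (n : nat)
  (Zc : 'I_n -> Om -> (X * label K)%type) (Zt : Om -> (X * label K)%type)
  (Uc : 'I_n -> Om -> R) (Ut : Om -> R) (alpha : R) :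
  (* label shift, with well-defined likelihood ratios w(y) = q(y)/p(y) *)
  label_shift P Q ->
  (forall y, 0 < label_marg P y) ->
  (* pi-hat : X -> simplex, fixed (computed from the independent training data) *)
  (forall x y, 0 <= pi x y) ->
  (forall x, \sum_y pi x y = 1) ->
  (forall y, measurable_fun setT (fun x => pi x y)) ->
  (* random variables and their laws *)
  (forall i, measurable_fun setT (Zc i)) -> measurable_fun setT Zt ->
  (forall i, measurable_fun setT (Uc i)) -> measurable_fun setT Ut ->
  (forall i A, measurable A -> Pr (Zc i @^-1` A) = P A) ->
  (forall A, measurable A -> Pr (Zt @^-1` A) = Q A) ->
  (forall i B, measurable B -> Pr (Uc i @^-1` B) = uniform_prob (@ltr01 R) B) ->
  (forall B, measurable B -> Pr (Ut @^-1` B) = uniform_prob (@ltr01 R) B) ->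
  mutually_indep Pr Zc Zt Uc Ut ->
  0 < alpha < 1 ->
  ((1 - alpha)%:E <=
   Pr [set om | conf_set alpha (lratio P Q) pi
                  (fun i => (Zc i om).2)
                  (fun i => score pi (Zc i om).1 (Zc i om).2 (Uc i om))
                  (Zt om).1 (Ut om) (Zt om).2])%E.
Proof.
move=> shift p_gt0 pi_ge0 pi_sum1 pi_meas mZc mZt mUc mUt lawZc lawZt lawUc lawUt indep alpha01.
by rewrite sample_coveredE; apply: Pr_sample_covered_ge.
Qed.
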